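(* For every connected twin-free graph $G$ with $n$ vertices, $i_{\max}(G)>\log_2(n)$.
   Context: $i_{\max}(G)$ denotes the number of maximal independent sets of $G$. A graph is twin-free if no two vertices have the same open neighbourhood. *)

From mathcomp Require Import all_boot.
From Stdlib Require Import Reals.
Set Implicit Arguments. Unset Strict Implicit. Unset Printing Implicit Defensive.

Definition simple_graph (T : finType) (e : rel T) : Prop :=
  symmetric e /\ irreflexive e.

Definition open_nbhd (T : finType) (e : rel T) (x : T) : {set T} := [set y | e x y].

Definition independent (T : finType) (e : rel T) (S : {set T}) : bool :=
  [forall x in S, forall y in S, ~~ e x y].

Definition maximal_independent (T : finType) (e : rel T) (S : {set T}) : bool :=
  independent e S && [forall x, (x \notin S) ==> ~~ independent e (x |: S)].

Definition imax (T : finType) (e : rel T) : nat :=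
  #|[set S : {set T} | maximal_independent e S]|.

Definition connected_graph (T : finType) (e : rel T) : Prop :=
  forall x y : T, connect e x y.

Definition twin_free (T : finType) (e : rel T) : Prop :=
  forall x y : T, x != y -> open_nbhd e x != open_nbhd e y.

Definition log2R (x : R) : R := (ln x / ln 2)%R.

(* Send each vertex v to the family of maximal independent sets containing v.
   The family is non-empty, since {v} extends to a maximal independent set.
   If a and b have the same family then N(a) is contained in N(b): a neighbour
   w of a not adjacent to b would lie, together with b, in a maximal
   independent set, which then also contains a. So in a twin-free graph the
   map is injective into the non-empty subfamilies of the i_max maximal sets,
   which gives n <= 2^i_max - 1. *)
From mathcomp Require Import all_boot.

Set Implicit Arguments.
Unset Strict Implicit.
Unset Printing Implicit Defensive.

Section MaximalIndependentSets.
Variables (T : finType) (e : rel T).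

Lemma independentP (S : {set T}) :
  reflect (forall x y, x \in S -> y \in S -> ~~ e x y) (independent e S).
Proof.
apply: (iffP forall_inP) => [indS x y xS yS | H x xS].
  by move/forall_inP: (indS x xS); apply.
by apply/forall_inP => y yS; apply: H.
Qed.

Lemma independent0 : independent e set0.
Proof. by apply/independentP => x y; rewrite inE. Qed.

Lemma maximal_independent_supset (A : {set T}) :
  independent e A -> exists2 S, maximal_independent e S & A \subset S.
Proof.
move=> indA.
have PA : independent e A && (A \subset A) by rewrite indA subxx.
case: (@arg_maxnP _ A (fun S => independent e S && (A \subset S)) (fun S => #|S|) PA) => S /andP[indS sAS] S_max.
exists S => //; rewrite /maximal_independent indS /=.
apply/forallP => x; apply/implyP => xS; apply/negP => indxS.
have := S_max (x |: S); rewrite indxS (subset_trans sAS) ?subsetUr //.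
by rewrite cardsU1 xS /= => /(_ isT); rewrite add1n ltnn.
Qed.

Lemma imax_gt0 : (0 < imax e)%N.
Proof.
have [S maxS _] := maximal_independent_supset independent0.
by rewrite /imax card_gt0; apply/set0Pn; exists S; rewrite inE.
Qed.

Definition mis_through (v : T) : {set {set T}} :=
  [set S | maximal_independent e S & v \in S].

Lemma mis_throughP (v : T) (S : {set T}) :
  reflect (maximal_independent e S /\ v \in S) (S \in mis_through v).
Proof. by rewrite inE; apply: andP. Qed.

Hypotheses (e_sym : symmetric e) (e_irr : irreflexive e).

Lemma independent2 (x y : T) : ~~ e x y -> independent e [set x; y].
Proof.
move=> nxy; apply/independentP => u v.
by rewrite !inE => /orP[]/eqP-> /orP[]/eqP->; rewrite ?e_irr // e_sym.
Qed.

Lemma mis_through_neq0 (v : T) : mis_through v != set0.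
Proof.
have [S maxS svS] := maximal_independent_supset (independent2 (negbT (e_irr v))).
have vS : v \in S by apply: (subsetP svS); rewrite !inE eqxx.
by apply/set0Pn; exists S; apply/mis_throughP.
Qed.

Lemma mis_through_nbhd_sub (a b : T) :
  mis_through a = mis_through b -> open_nbhd e a \subset open_nbhd e b.
Proof.
move=> eq_ab; apply/subsetP => w; rewrite !inE => e_aw.
apply: contraT => ne_bw.
have [S maxS sbwS] := maximal_independent_supset (independent2 ne_bw).
have [bS wS] : b \in S /\ w \in S.
  by split; apply: (subsetP sbwS); rewrite !inE eqxx ?orbT.
have /mis_throughP[_ aS] : S \in mis_through a.
  by rewrite eq_ab; apply/mis_throughP.
case/andP: maxS => /independentP indS _.
by move: (indS a w aS wS); rewrite e_aw.
Qed.

Hypothesis e_twin_free : twin_free e.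

Lemma mis_through_inj : injective mis_through.
Proof.
move=> u v eq_uv; apply/eqP; apply: contraT => neq_uv.
by have := e_twin_free neq_uv; rewrite eqEsubset !mis_through_nbhd_sub.
Qed.

Lemma card_lt_exp_imax : (#|T| < 2 ^ imax e)%N.
Proof.
set M := [set S : {set T} | maximal_independent e S].
have sub_nonempty : mis_through @: T \subset powerset M :\ set0.
  apply/subsetP => _ /imsetP[v _ ->]; rewrite !inE mis_through_neq0 /=.
  by apply/subsetP => S /mis_throughP[maxS _]; rewrite inE.
rewrite /imax -/M -card_powerset (cardsD1 set0) !inE sub0set add1n ltnS.
by rewrite -(card_imset _ mis_through_inj) subset_leq_card.
Qed.

End MaximalIndependentSets.

(* Imported only now: Reals rebinds [_ ^ _] in [nat_scope] to [Nat.pow]. *)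
From Stdlib Require Import Reals Lra.

Lemma INR_expn (m k : nat) : INR (expn m k) = (INR m ^ k)%R.
Proof. by elim: k => [|k IHk] //; rewrite expnS mult_INR IHk. Qed.

Lemma log2R_INR_lt (n k : nat) :
  (0 < k)%N -> (n < expn 2 k)%N -> (log2R (INR n) < INR k)%R.
Proof.
move=> k_gt0 n_lt.
have ln2_gt0 : (0 < ln 2)%R by have := ln_lt_2; lra.
have k_pos : (0 < INR k)%R by apply: lt_0_INR; apply/ltP.
rewrite /log2R; apply: (Rmult_lt_reg_r (ln 2)) => //.
rewrite Rmult_assoc Rinv_l ?Rmult_1_r; last lra.
case: n n_lt => [|n] n_lt.
  (* [ln] is [0] on non-positive arguments *)
  have ln0 : ln 0 = 0%R.
    by rewrite /ln; case: Rlt_dec => // h; case: (Rlt_irrefl _ h).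
  by rewrite /= ln0; apply: Rmult_lt_0_compat.
rewrite -ln_pow; last lra.
apply: ln_increasing; first by apply: lt_0_INR; apply/ltP.
by rewrite -[2%R]/(INR 2) -INR_expn; apply: lt_INR; apply/ltP.
Qed.

Theorem proposition2p3 (T : finType) (e : rel T) :
  simple_graph e -> connected_graph e -> twin_free e ->
  (log2R (INR #|T|) < INR (imax e))%R.
Proof.
move=> [e_sym e_irr] _ e_twin_free.
apply: log2R_INR_lt; first exact: imax_gt0.
exact: card_lt_exp_imax e_sym e_irr e_twin_free.
Qed.
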